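(* In the setting below, under the tight disturbance bound assumption and the persistent excitation assumption, the fixed-complexity parameter set $\Theta_t$ with periodic update converges to $\{\theta^\ast\}$ with probability 1; that is, with probability 1, $\bigcap_{t\ge0}\Theta_t=\{\theta^\ast\}$.
   Context: Setting: $\theta^\ast\in\mathbb{R}^p$ is a fixed (unknown) parameter vector. $\mathcal{W}=\{w\in\mathbb{R}^{n_x}:\Pi_w w\le\pi_w\}$ is a compact convex polytope with $\pi_w>0$. The disturbances $w_0,w_1,\dots$ are independent random vectors with $w_t\in\mathcal{W}$ for all $t$. $D_0,D_1,\dots\in\mathbb{R}^{n_x\times p}$ is a given (non-random) sequence of regressor matrices. For $t\ge1$ the (random) unfalsified parameter set is $\Delta_t=\{\theta\in\mathbb{R}^p: D_{t-1}(\theta^\ast-\theta)+w_{t-1}\in\mathcal{W}\}$. $\|\cdot\|$ is the Euclidean norm (induced 2-norm for matrices); $\partial\mathcal{W}$ is the boundary of $\mathcal{W}$; $[M]_i$ is the $i$th row of $M$. Tight disturbance bound assumption: there is a function $p_w:(0,\infty)\to(0,1]$ such that for all $w^0\in\partial\mathcal{W}$, all $\epsilon>0$ and all $t\ge0$, $\Pr\{\|w_t-w^0\|<\epsilon\}\ge p_w(\epsilon)$. Persistent excitation assumption: there exist $\tau>0$, $\beta>0$ and an integer $N_u\ge\lceil p/n_x\rceil$ such that for every $t\ge0$, $\|D_t\|\le\tau$ and $\sum_{j=t}^{t+N_u-1}D_j^\top D_j\succeq\beta I$. Fixed-complexity parameter set with periodic update: $M_\Theta\in\mathbb{R}^{r\times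 p}$ has rows of unit Euclidean norm and is such that $\Theta(\mu):=\{\theta:M_\Theta\theta\le\mu\}$ is bounded for every $\mu\in\mathbb{R}^r$; $\Theta_0=\Theta(\mu_0)$ contains $\theta^\ast$. For $t\ge1$: if $t=kN_u$ for some integer $k\ge1$, then $\Theta_t=\Theta(\mu_t)$ with $[\mu_t]_i=\max\{[M_\Theta]_i\theta:\theta\in\Theta_{t-N_u}\cap\bigcap_{j=t-N_u+1}^t\Delta_j\}$ for $i=1,\dots,r$; otherwise $\Theta_t=\Theta_{t-1}$. *)

From HB Require Import structures.
From mathcomp Require Import all_boot all_order all_algebra.
From mathcomp Require Import all_classical all_reals all_analysis.
Set Implicit Arguments. Unset Strict Implicit. Unset Printing Implicit Defensive.
Import Order.TTheory GRing.Theory Num.Theory.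
Local Open Scope classical_set_scope.
Local Open Scope ring_scope.

Section Defs.
Variable R : realType.

Definition vnorm n (v : 'cV[R]_n) : R := Num.sqrt (\sum_i (v i 0) ^+ 2).

Definition cVle n (u v : 'cV[R]_n) : Prop := forall i, u i 0 <= v i 0.

(* induced 2-norm bound: ||A|| <= c  iff  ||A v|| <= c ||v|| for all v *)
Definition opnorm_le m n (A : 'M[R]_(m, n)) (c : R) : Prop :=
  forall v : 'cV[R]_n, vnorm (A *m v) <= c * vnorm v.

(* Loewner order A >= b I for a square matrix: v^T (A - b I) v >= 0 *)
Definition psd_ge n (A : 'M[R]_n) (b : R) : Prop :=
  forall v : 'cV[R]_n, 0 <= ((v^T *m (A - b%:M) *m v) 0 0).

Definition polytope m n (Pi : 'M[R]_(m, n)) (pi : 'cV[R]_m) : set 'cV[R]_n :=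
  [set w | cVle (Pi *m w) pi].

Definition vbounded n (S : set 'cV[R]_n) : Prop :=
  exists C : R, forall x, S x -> vnorm x <= C.

Definition boundary n (S : set 'cV[R]_n) : set 'cV[R]_n :=
  [set x | forall e : R, 0 < e ->
     (exists a, S a /\ vnorm (a - x) < e) /\ (exists b, ~ S b /\ vnorm (b - x) < e)].

(* Borel sigma-algebra on R^n (generated by products of Borel sets of R) *)
Definition mxborel n : set (set 'cV[R]_n) :=
  <<s [set [set v : 'cV[R]_n | forall i, B i (v i 0)] | B in
        [set B : 'I_n -> set R | forall i, measurable (B i)]] >>.

Definition ceil_div (a b : nat) : nat := ((a + b.-1) %/ b)%N.

Definition ThetaSet r p (M : 'M[R]_(r, p)) (mu : 'cV[R]_r) : set 'cV[R]_p :=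
  [set th | cVle (M *m th) mu].

(* Unfalsified set Delta_t (t >= 1), for a given disturbance realization wr *)
Definition Delta nx p mw (Pi_w : 'M[R]_(mw, nx)) (pi_w : 'cV[R]_mw)
  (D : nat -> 'M[R]_(nx, p)) (thstar : 'cV[R]_p) (wr : nat -> 'cV[R]_nx)
  (t : nat) : set 'cV[R]_p :=
  [set th | polytope Pi_w pi_w (D t.-1 *m (thstar - th) + wr t.-1)].

(* The maximum of a (nonempty, compact-attained) set of reals; here a max of
   M_i theta over a compact polytope, which equals its supremum. *)
Definition maxR (S : set R) : R := sup S.

Fixpoint mu_per nx p r mw (Pi_w : 'M[R]_(mw, nx)) (pi_w : 'cV[R]_mw)
  (D : nat -> 'M[R]_(nx, p)) (thstar : 'cV[R]_p) (M : 'M[R]_(r, p))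
  (mu0 : 'cV[R]_r) (Nu : nat) (wr : nat -> 'cV[R]_nx) (k : nat) : 'cV[R]_r :=
  match k with
  | 0 => mu0
  | k'.+1 =>
      let prev := mu_per Pi_w pi_w D thstar M mu0 Nu wr k' in
      \col_i maxR [set (row i M *m th) 0 0 | th in
          ThetaSet M prev `&`
          [set th | forall j, (k' * Nu < j <= k'.+1 * Nu)%N ->
                              Delta Pi_w pi_w D thstar wr j th]]
  end.

(* Theta_t: updated at t = k N_u (k >= 1), constant otherwise, so
   Theta_t = Theta(mu_{floor(t/N_u) N_u}). *)
Definition Theta_t nx p r mw (Pi_w : 'M[R]_(mw, nx)) (pi_w : 'cV[R]_mw)
  (D : nat -> 'M[R]_(nx, p)) (thstar : 'cV[R]_p) (M : 'M[R]_(r, p))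
  (mu0 : 'cV[R]_r) (Nu : nat) (wr : nat -> 'cV[R]_nx) (t : nat) : set 'cV[R]_p :=
  ThetaSet M (mu_per Pi_w pi_w D thstar M mu0 Nu wr (t %/ Nu)%N).

End Defs.

Definition rvec_measurable (R : realType) (d : measure_display)
  (Omega : measurableType d) n (X : Omega -> 'cV[R]_n) : Prop :=
  forall A, mxborel A -> measurable (X @^-1` A).

Definition mutually_independent (R : realType) (d : measure_display)
  (Omega : measurableType d) (P : probability Omega R) n
  (w : nat -> Omega -> 'cV[R]_n) : Prop :=
  forall (S : seq nat) (A : nat -> set 'cV[R]_n),
    uniq S -> (forall t, t \in S -> mxborel (A t)) ->
    P (\big[setI/setT]_(t <- S) (w t @^-1` A t)) =
      (\prod_(t <- S) P (w t @^-1` A t))%E.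

(* By persistent excitation the Gram matrix [G_k] of the k-th window of [Nu]
   regressors is invertible with a uniformly bounded inverse, so each row of [M]
   is [M_i = x^T G_k] and [M_i (thstar - th)] splits into the window terms
   [(D_s x)^T D_s (thstar - th)].  For an unfalsified [th] each term equals
   [c_s^T (u_s - w_s)] with [u_s] in [W].  If every disturbance [w_s] of the window
   lands near a boundary point of [W] that (almost) minimises [c_s^T], an event of
   probability at least [p_w(del)^Nu] by the tight-bound assumption, the next
   update brings [mu_i] within [eps] of [M_i thstar].  The windows are independent,
   so almost surely this happens for every row and every [eps = 1/(n+1)]; as
   [Theta(0)] is bounded, the intersection of the [Theta_t] is then [{thstar}]. *)

Set Warnings "-notation-overridden -ambiguous-paths -notation-incompatible-prefix".
From HB Require Import structures.
From mathcomp Require Import all_boot all_order all_algebra.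
From mathcomp Require Import all_classical all_reals all_analysis.
From mathcomp Require Import ring lra zify.
Import Order.TTheory GRing.Theory Num.Theory numFieldNormedType.Exports.
Local Open Scope classical_set_scope.
Local Open Scope ring_scope.
Set Implicit Arguments. Unset Strict Implicit. Unset Printing Implicit Defensive.

Section ColumnVectors.
Variable R : realType.

Lemma vnorm_ge0 n (v : 'cV[R]_n) : 0 <= vnorm v.
Proof. exact: sqrtr_ge0. Qed.

Lemma vnorm_sqr n (v : 'cV[R]_n) : vnorm v ^+ 2 = \sum_i (v i 0) ^+ 2.
Proof. by rewrite /vnorm sqr_sqrtr // sumr_ge0 // => i _; rewrite sqr_ge0. Qed.

Lemma coord_le_vnorm n (v : 'cV[R]_n) l : `|v l 0| <= vnorm v.
Proof.
rewrite /vnorm -sqrtr_sqr ler_sqrt; last by rewrite sumr_ge0 // => i _; rewrite sqr_ge0.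
by rewrite (bigD1 l) //= lerDl sumr_ge0 // => i _; rewrite sqr_ge0.
Qed.

Lemma vnorm_eq0 n (v : 'cV[R]_n) : vnorm v = 0 -> v = 0.
Proof.
move=> h; apply/matrixP => i j; rewrite (ord1 j) mxE.
by apply/eqP; rewrite -normr_le0 -h coord_le_vnorm.
Qed.

Lemma vnorm_gt0 n (v : 'cV[R]_n) : v != 0 -> 0 < vnorm v.
Proof.
move=> vn0; rewrite lt_neqAle vnorm_ge0 andbT eq_sym.
by apply: contra vn0 => /eqP/vnorm_eq0 ->.
Qed.

Lemma vnormZ n (v : 'cV[R]_n) (s : R) : vnorm (s *: v) = `|s| * vnorm v.
Proof.
rewrite /vnorm -sqrtr_sqr -sqrtrM ?sqr_ge0 //; congr Num.sqrt.
by rewrite mulr_sumr; apply: eq_bigr => i _; rewrite mxE exprMn.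
Qed.

Lemma const_mx1_neq0 n : (0 < n)%N -> const_mx 1 != 0 :> 'cV[R]_n.
Proof.
by move=> n0; apply/eqP => /matrixP/(_ (Ordinal n0) 0); rewrite !mxE; apply/eqP; exact: oner_neq0.
Qed.

Lemma mulmxD_coord m n (A : 'M[R]_(m, n)) (u v : 'cV[R]_n) k :
  (A *m (u + v)) k 0 = (A *m u) k 0 + (A *m v) k 0.
Proof. by rewrite mulmxDr !mxE. Qed.

Lemma mulmxB_coord m n (A : 'M[R]_(m, n)) (u v : 'cV[R]_n) k :
  (A *m (u - v)) k 0 = (A *m u) k 0 - (A *m v) k 0.
Proof. by rewrite mulmxBr !mxE. Qed.

Lemma mulmx_ray_coord m n (A : 'M[R]_(m, n)) (u v : 'cV[R]_n) (t : R) k :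
  (A *m (u + t *: v)) k 0 = (A *m u) k 0 + t * (A *m v) k 0.
Proof. by rewrite mulmxDr -scalemxAr !mxE. Qed.

Lemma dot_coord_le n (u v : 'cV[R]_n) (a b : R) :
  (forall l, `|u l 0| <= a) -> (forall l, `|v l 0| <= b) ->
  `|(u^T *m v) 0 0| <= n%:R * a * b.
Proof.
move=> ua vb; rewrite mxE; apply: le_trans (ler_norm_sum _ _ _) _.
rewrite -mulrA -[n in n%:R]card_ord -sum1_card natr_sum mulr_suml.
apply: ler_sum => l _; rewrite mxE normrM mul1r.
by apply: ler_pM.
Qed.

End ColumnVectors.

Section PositiveDefinite.
Variable R : realType.

Lemma psd_ge_quad n (G : 'M[R]_n) b (x : 'cV[R]_n) : psd_ge G b ->
  b * vnorm x ^+ 2 <= (x^T *m G *m x) 0 0.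
Proof.
move=> /(_ x); rewrite mulmxBr mulmxBl [X in 0 <= X]mxE [X in 0 <= _ + X]mxE subr_ge0.
congr (_ <= _); rewrite mul_mx_scalar -scalemxAl mxE vnorm_sqr mxE; congr (_ * _).
by apply: eq_bigr => l _; rewrite mxE expr2.
Qed.

Lemma psd_ge_neq0 n (G : 'M[R]_n) b : 0 < b -> (0 < n)%N -> psd_ge G b -> G != 0.
Proof.
move=> b0 n0 hG; apply/eqP => G0.
have := psd_ge_quad (const_mx 1) hG; rewrite G0 mulmx0 mul0mx mxE.
by rewrite pmulr_rle0 // leNgt exprn_gt0 // vnorm_gt0 // const_mx1_neq0.
Qed.

Lemma psd_ge_unitmx n (G : 'M[R]_n) b : 0 < b -> psd_ge G b -> G \in unitmx.
Proof.
move=> b0 hG; rewrite -row_free_unit -kermx_eq0; apply/eqP/row_matrixP => l.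
rewrite row0; set u := row l (kermx G).
have uG0 : u *m G = 0 by rewrite /u -row_mul mulmx_ker row0.
have : b * vnorm u^T ^+ 2 <= 0.
  by apply: le_trans (psd_ge_quad u^T hG) _; rewrite trmxK uG0 mul0mx mxE.
rewrite pmulr_rle0 // => h.
have : vnorm u^T = 0 by apply/eqP; rewrite -sqrf_eq0 eq_le h sqr_ge0.
by move/vnorm_eq0/(congr1 trmx); rewrite trmxK trmx0.
Qed.

(* Coercivity: [b |x|^2 <= x^T G x = x^T m <= n |x|] bounds the solution of [G x = m]. *)
Lemma psd_ge_solve n (G : 'M[R]_n) b (m : 'cV[R]_n) : 0 < b -> psd_ge G b ->
  (forall l, `|m l 0| <= 1) ->
  exists x : 'cV[R]_n, G *m x = m /\ vnorm x <= n%:R / b.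
Proof.
move=> b0 hG m1; have Gu := psd_ge_unitmx b0 hG.
exists (invmx G *m m); split; first exact: mulKVmx.
set x := invmx G *m m.
have quad_le : b * vnorm x ^+ 2 <= n%:R * vnorm x.
  apply: le_trans (psd_ge_quad x hG) _.
  rewrite -mulmxA mulKVmx // -[x^T *m m]trmxK trmx_mul trmxK [X in X <= _]mxE.
  apply: le_trans (ler_norm _) _; rewrite -[X in X * _]mulr1.
  exact: dot_coord_le (coord_le_vnorm x).
have [->|xn0] := eqVneq (vnorm x) 0; first by rewrite divr_ge0 // ltW.
have xp : 0 < vnorm x by rewrite lt_neqAle eq_sym xn0 vnorm_ge0.
by rewrite ler_pdivlMr // mulrC -(ler_pM2r xp) -mulrA -expr2.
Qed.

Lemma psd_ge_gram_dims nx p (D : nat -> 'M[R]_(nx, p)) t N b : 0 < b -> (0 < p)%N ->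
  psd_ge (\sum_(t <= j < t + N) (D j)^T *m D j) b -> (0 < N)%N /\ (0 < nx)%N.
Proof.
move=> b0 p0 /(psd_ge_neq0 b0 p0) G_neq0; rewrite !lt0n; split; apply/eqP => dim0.
  by move: G_neq0; rewrite dim0 addn0 big_geq ?eqxx.
move: G_neq0; rewrite big1 ?eqxx // => j _; move: (D j); rewrite dim0 => Dj.
by rewrite flatmx0 mulmx0.
Qed.

End PositiveDefinite.

Section PolytopeBoundary.
Variable R : realType.
Variables (nx mw : nat) (Pi_w : 'M[R]_(mw, nx)) (pi_w : 'cV[R]_mw).
Hypothesis pi_w_gt0 : forall i, 0 < pi_w i 0.
Hypothesis W_bounded : vbounded (polytope Pi_w pi_w).
Local Notation W := (polytope Pi_w pi_w).

Lemma polytope0 : W 0.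
Proof. by move=> k; rewrite mulmx0 mxE ltW. Qed.

Lemma ray_exits_at_boundary (w1 d : 'cV[R]_nx) : W w1 -> d != 0 ->
  exists2 t, 0 <= t & boundary W (w1 + t *: d) /\ W (w1 + t *: d).
Proof.
move=> Ww1 dn0; have dp := vnorm_gt0 dn0.
pose T := [set t : R | 0 <= t /\ W (w1 + t *: d)].
have T0 : T 0 by split => //; rewrite scale0r addr0.
have [C hC] := W_bounded.
have [l dl] : exists l, d l 0 != 0.
  apply/existsP; apply: contraR dn0 => /existsPn dn; apply/eqP/matrixP => i j.
  by rewrite (ord1 j) mxE; apply/eqP; move: (dn i); rewrite negbK.
have Tub : has_ubound T.
  exists ((C + `|w1 l 0|) / `|d l 0|) => t [t0 Wt]; rewrite ler_pdivlMr ?normr_gt0 //.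
  have := le_trans (coord_le_vnorm _ l) (hC _ Wt); rewrite !mxE => Wl.
  rewrite -(ger0_norm t0) -normrM; apply: le_trans (lerD Wl (lexx `|w1 l 0|)).
  by have := ler_normB (w1 l 0 + t * d l 0) (w1 l 0); rewrite addrAC subrr add0r.
pose ts := sup T.
have ts0 : 0 <= ts by apply: ub_le_sup.
have Wts : W (w1 + ts *: d).
  move=> k; rewrite mulmx_ray_coord.
  have [dk_pos|dk_le0] := ltP 0 ((Pi_w *m d) k 0).
    rewrite -lerBrDl -ler_pdivlMr //; apply: ge_sup; first by exists 0.
    move=> t [t0 Wt]; rewrite ler_pdivlMr // lerBrDl.
    by have := Wt k; rewrite mulmx_ray_coord.
  by apply: le_trans (Ww1 k); rewrite gerDl mulr_ge0_le0.
exists ts => //; split => // e e0; split.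
  by exists (w1 + ts *: d); rewrite subrr /vnorm big1 ?sqrtr0 // => i _; rewrite mxE expr0n.
pose s := e / (2 * vnorm d).
have s0 : 0 < s by rewrite divr_gt0 // mulr_gt0.
exists (w1 + (ts + s) *: d); split.
  move=> Wout; have : ts + s <= ts by apply: ub_le_sup => //; split => //; rewrite addr_ge0 // ltW.
  by rewrite gerDl leNgt s0.
have -> : w1 + (ts + s) *: d - (w1 + ts *: d) = s *: d.
  by rewrite scalerDl addrA [_ + s *: d]addrC addrK.
rewrite vnormZ ger0_norm ?ltW // /s.
have -> : e / (2 * vnorm d) * vnorm d = e / 2 by field; rewrite gt_eqF.
by rewrite ltr_pdivrMr // ltr_pMr // ltr1n.
Qed.

Lemma linear_form_lbound (c : 'cV[R]_nx) : exists B, forall w, W w -> B <= (c^T *m w) 0 0.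
Proof.
have [C hC] := W_bounded; exists (- (nx%:R * vnorm c * C)) => w Ww.
rewrite lerNl; apply: le_trans (ler_norm _) _; rewrite normrN.
apply: dot_coord_le (coord_le_vnorm c) _ => l.
exact: le_trans (coord_le_vnorm w l) (hC _ Ww).
Qed.

(* Moving from a near-minimiser along [-c] only decreases [c^T w], and
   the ray leaves the bounded polytope through its boundary. *)
Lemma boundary_near_argmin (c : 'cV[R]_nx) (eta : R) : (0 < nx)%N -> 0 < eta ->
  exists w0, [/\ boundary W w0, W w0 &
    forall w, W w -> (c^T *m w0) 0 0 <= (c^T *m w) 0 0 + eta].
Proof.
move=> nx0 eta0.
pose S := [set (c^T *m w) 0 0 | w in W].
have Sinf : has_inf S.
  split; first by exists ((c^T *m (0 : 'cV_nx)) 0 0), 0 => //; exact: polytope0.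
  have [B hB] := linear_form_lbound c; exists B => _ [w Ww <-]; exact: hB.
have [_ [w1 Ww1 <-] w1_near] := inf_adherent eta0 Sinf.
have w1_le w : W w -> (c^T *m w1) 0 0 <= (c^T *m w) 0 0 + eta.
  move=> Ww; apply/ltW/(lt_le_trans w1_near); rewrite lerD2r.
  by apply: ge_inf; [case: Sinf | exists w].
have [c0|cn0] := eqVneq c 0.
  have [t _ [bt Wt]] := ray_exits_at_boundary Ww1 (const_mx1_neq0 R nx0).
  by exists (w1 + t *: const_mx 1); split => // w _; rewrite c0 trmx0 !mul0mx mxE add0r ltW.
have nc0 : - c != 0 by rewrite oppr_eq0.
have [t t0 [bt Wt]] := ray_exits_at_boundary Ww1 nc0.
exists (w1 + t *: - c); split => // w Ww; apply: le_trans (w1_le _ Ww).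
rewrite mulmx_ray_coord mulmxN [X in _ * X]mxE mulrN gerDl oppr_le0 mulr_ge0 // mxE.
by rewrite sumr_ge0 // => l _; rewrite mxE -expr2 sqr_ge0.
Qed.

End PolytopeBoundary.

Lemma ler_addSinv (R : realType) (x y : R) : (forall n : nat, x <= y + n.+1%:R^-1) -> x <= y.
Proof.
move=> xle; apply/ler_addgt0Pr => e e0.
have [N _ /(_ N (leqnn N)) Ne] := near_infty_natSinv_lt (PosNum e0).
by apply: le_trans (xle N) _; rewrite lerD2l ltW.
Qed.

Lemma recession_eq0 (R : realType) r p (M : 'M[R]_(r, p)) (v : 'cV[R]_p) :
  vbounded (ThetaSet M 0) -> (forall i, (M *m v) i 0 <= 0) -> v = 0.
Proof.
move=> [C hC] Mv_le0; apply: vnorm_eq0; apply/eqP; apply: contraT => vn0.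
have vp : 0 < vnorm v by rewrite lt_neqAle eq_sym vn0 vnorm_ge0.
pose s := (`|C| + 1) / vnorm v.
have s0 : 0 <= s by rewrite divr_ge0 // ?addr_ge0 // ltW.
have : s * vnorm v <= C.
  rewrite -(ger0_norm s0) -vnormZ; apply: hC => i.
  rewrite -scalemxAr [X in X <= _]mxE [X in _ <= X]mxE.
  exact: mulr_ge0_le0 s0 (Mv_le0 i).
by rewrite divfK ?gt_eqF //; have := ler_norm C; lra.
Qed.

Section PeriodicUpdate.
Variable R : realType.
Variables (nx p mw r : nat) (thstar : 'cV[R]_p) (Pi_w : 'M[R]_(mw, nx))
  (pi_w : 'cV[R]_mw) (D : nat -> 'M[R]_(nx, p)) (M : 'M[R]_(r, p))
  (mu0 : 'cV[R]_r) (Nu : nat) (wr : nat -> 'cV[R]_nx).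
Hypothesis wr_in_W : forall t, polytope Pi_w pi_w (wr t).
Hypothesis M_rows_unit : forall i, vnorm (row i M)^T = 1.
Hypothesis ThetaSet_bounded : forall mu : 'cV[R]_r, vbounded (ThetaSet M mu).
Hypothesis thstar_in_Theta0 : ThetaSet M mu0 thstar.

Local Notation mu k := (mu_per Pi_w pi_w D thstar M mu0 Nu wr k).
Local Notation unfalsified k th :=
  (forall j, (k * Nu < j <= k.+1 * Nu)%N -> Delta Pi_w pi_w D thstar wr j th).

Lemma mulmx_row_coord q (A : 'M[R]_(r, q)) i (v : 'cV[R]_q) :
  (A *m v) i 0 = (row i A *m v) 0 0.
Proof. by rewrite -row_mul [RHS]mxE. Qed.

Lemma M_coord_le1 i l : `|(row i M)^T l 0| <= 1.
Proof. by rewrite -(M_rows_unit i) coord_le_vnorm. Qed.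

Lemma Delta_thstar j : Delta Pi_w pi_w D thstar wr j thstar.
Proof. by rewrite /Delta /= subrr mulmx0 add0r; exact: wr_in_W. Qed.

Lemma update_set_ubound k i : has_ubound
  [set (row i M *m th) 0 0 | th in ThetaSet M (mu k) `&` [set th | unfalsified k th]].
Proof.
have [C hC] := ThetaSet_bounded (mu k).
exists (p%:R * 1 * C) => _ [th [Ith _] <-].
apply: le_trans (ler_norm _) _; rewrite -[row i M]trmxK.
by apply: dot_coord_le (@M_coord_le1 i) _ => l; exact: le_trans (coord_le_vnorm _ l) (hC _ Ith).
Qed.

Lemma mu_per_thstar k : ThetaSet M (mu k) thstar.
Proof.
elim: k => [|k IH] //= i; rewrite mxE mulmx_row_coord.
apply: ub_le_sup; first exact: update_set_ubound.
by exists thstar => //; split => // j _; exact: Delta_thstar.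
Qed.

Lemma mu_perS_le k i (b : R) :
  (forall th, ThetaSet M (mu k) th -> unfalsified k th -> (row i M *m th) 0 0 <= b) ->
  mu k.+1 i 0 <= b.
Proof.
move=> hb; rewrite /= mxE; apply: ge_sup; last by move=> _ [th [? ?] <-]; exact: hb.
exists ((row i M *m thstar) 0 0), thstar => //; split; first exact: mu_per_thstar.
by move=> j _; exact: Delta_thstar.
Qed.

Lemma Theta_inter_thstar : (0 < Nu)%N ->
  (forall i n, exists k, mu k i 0 <= (row i M *m thstar) 0 0 + n.+1%:R^-1) ->
  [set th | forall t, Theta_t Pi_w pi_w D thstar M mu0 Nu wr t th] = [set thstar].
Proof.
move=> Nu0 mu_near; apply/seteqP; split => th /=; last by move=> -> t; exact: mu_per_thstar.
move=> th_in; apply/eqP; rewrite -subr_eq0; apply/eqP.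
apply: (recession_eq0 (ThetaSet_bounded 0)) => i.
rewrite mulmxB_coord subr_le0 !mulmx_row_coord; apply: ler_addSinv => n.
have [k mu_le] := mu_near i n; apply: le_trans mu_le.
by have := th_in (k * Nu)%N i; rewrite /Theta_t mulnK // mulmx_row_coord.
Qed.

Definition gram k : 'M[R]_p := \sum_(k * Nu <= j < k * Nu + Nu) (D j)^T *m D j.

Lemma gram_sym k : (gram k)^T = gram k.
Proof.
rewrite /gram raddf_sum; apply: eq_bigr => j _ /=.
by rewrite trmx_mul trmxK.
Qed.

Lemma row_gram_mul k i (x v : 'cV[R]_p) : gram k *m x = (row i M)^T ->
  (row i M *m v) 0 0 = \sum_(k * Nu <= s < k * Nu + Nu) ((D s *m x)^T *m (D s *m v)) 0 0.
Proof.
move=> hx; rewrite -[row i M]trmxK -hx trmx_mul gram_sym /gram.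
rewrite mulmx_sumr mulmx_suml summxE; apply: eq_bigr => s _.
by rewrite trmx_mul !mulmxA.
Qed.

(* Write [M_i] as [sum_s (D_s x)^T D_s] through the Gram matrix of the window: each
   term [(D_s x)^T D_s (thstar - th)] equals [c^T (u - w_s)] with [u] in [W], which
   is bounded below when [w_s] is [del]-close to a near-minimiser of [c^T] on [W]. *)
Lemma window_bound k i (x : 'cV[R]_p) (w0 : nat -> 'cV[R]_nx) (eta del Bc : R) :
  gram k *m x = (row i M)^T ->
  (forall s, (k * Nu <= s < k * Nu + Nu)%N -> [/\
     forall w, polytope Pi_w pi_w w ->
       ((D s *m x)^T *m w0 s) 0 0 <= ((D s *m x)^T *m w) 0 0 + eta,
     forall l, `|wr s l 0 - w0 s l 0| < del &
     forall l, `|(D s *m x) l 0| <= Bc]) ->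
  forall th, unfalsified k th ->
  (row i M *m th) 0 0 <= (row i M *m thstar) 0 0 + Nu%:R * (eta + nx%:R * Bc * del).
Proof.
move=> hx hw th hth.
rewrite -lerBlDl -opprB lerNl.
rewrite -mulmxB_coord.
have -> : Nu%:R * (eta + nx%:R * Bc * del) =
    \sum_(k * Nu <= s < k * Nu + Nu) (eta + nx%:R * Bc * del).
  by rewrite sumr_const_nat addnC addnK mulr_natl.
rewrite (row_gram_mul _ hx) -sumrN.
apply: ler_sum_nat => s hs; have [near_min close c_le] := hw s hs.
set c := D s *m x.
have Wu : polytope Pi_w pi_w (D s *m (thstar - th) + wr s).
  by apply: (hth s.+1); move: hs; rewrite mulSn; lia.
have close_dot : `|(c^T *m (wr s - w0 s)) 0 0| <= nx%:R * Bc * del.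
  by apply: dot_coord_le c_le _ => l; rewrite !mxE ltW.
have := near_min _ Wu; move: close_dot; rewrite mulmxB_coord mulmxD_coord.
by move=> /ler_normlP[? ?] ?; lra.
Qed.

End PeriodicUpdate.

Section IndependentWindows.
Variable R : realType.
Variables (d : measure_display) (Omega : measurableType d) (P : probability Omega R)
  (nx : nat) (w : nat -> Omega -> 'cV[R]_nx).
Hypothesis w_measurable : forall t, rvec_measurable (w t).
Hypothesis w_independent : mutually_independent P w.

Definition pr (A : set Omega) : R := fine (P A).

Lemma prE A : measurable A -> P A = (pr A)%:E.
Proof.
move=> mA; rewrite /pr fineK // ge0_fin_numE ?measure_ge0 //.
by apply: le_lt_trans (probability_le1 P mA) _; rewrite ltry.
Qed.

Lemma pr_setT : pr setT = 1.
Proof. by rewrite /pr probability_setT. Qed.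

Lemma pr_ge0 A : measurable A -> 0 <= pr A.
Proof. by move=> mA; rewrite -lee_fin -prE // measure_ge0. Qed.

Lemma pr_le1 A : measurable A -> pr A <= 1.
Proof. by move=> mA; rewrite -lee_fin -prE // probability_le1. Qed.

Lemma le_pr A B : measurable A -> measurable B -> A `<=` B -> pr A <= pr B.
Proof. by move=> mA mB AB; rewrite -lee_fin -!prE // le_measure // inE. Qed.

Lemma prD A B : measurable A -> measurable B -> pr (A `\` B) = pr A - pr (A `&` B).
Proof.
move=> mA mB; apply: EFin_inj; rewrite EFinB -!prE //; try exact: measurableI.
  by apply: measureD => //; exact: le_lt_trans (probability_le1 P mA) (ltry 1).
exact: measurableD.
Qed.

Definition cylinder (S : seq nat) (F : nat -> set 'cV[R]_nx) : set Omega :=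
  \big[setI/setT]_(t <- S) (w t @^-1` F t).

Lemma cylinder_mem S F om : cylinder S F om -> forall s, s \in S -> F s (w s om).
Proof.
elim: S => [|t S IH] //; rewrite /cylinder big_cons => -[Ft cyl] s.
by rewrite in_cons => /orP[/eqP ->|/IH]; [|apply].
Qed.

Lemma measurable_cylinder S F : (forall t, t \in S -> mxborel (F t)) ->
  measurable (cylinder S F).
Proof.
elim: S => [|t S IH] SF; rewrite /cylinder ?big_nil ?big_cons; first exact: measurableT.
apply: measurableI; first by apply: w_measurable; apply: SF; exact: mem_head.
by apply: IH => u uS; apply: SF; rewrite in_cons uS orbT.
Qed.

Lemma pr_cylinder S F : uniq S -> (forall t, t \in S -> mxborel (F t)) ->
  pr (cylinder S F) = \prod_(t <- S) pr (w t @^-1` F t).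
Proof.
move=> uS SF; rewrite {1}/pr /cylinder w_independent //.
suff -> : (\prod_(t <- S) P (w t @^-1` F t))%E = (\prod_(t <- S) pr (w t @^-1` F t))%:E by [].
elim: S {uS} SF => [|t S IH] SF; first by rewrite !big_nil.
rewrite !big_cons IH => [|u uS]; last by apply: SF; rewrite in_cons uS orbT.
by rewrite prE ?EFinM //; apply: w_measurable; apply: SF; exact: mem_head.
Qed.

Variables (N : nat) (B : nat -> set 'cV[R]_nx).
Hypothesis B_borel : forall t, mxborel (B t).

Definition window_event k := cylinder (iota (k * N) N) B.
Definition no_window_before n := \big[setI/setT]_(0 <= k < n) ~` window_event k.

Lemma measurable_window_event k : measurable (window_event k).
Proof. by apply: measurable_cylinder => t _; exact: B_borel. Qed.

Lemma measurable_no_window_before n : measurable (no_window_before n).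
Proof.
elim: n => [|n IH]; first by rewrite /no_window_before big_geq.
rewrite /no_window_before big_nat_recr //= -/(no_window_before n).
by apply: measurableI => //; apply/measurableC/measurable_window_event.
Qed.

Definition with_window n (F : nat -> set 'cV[R]_nx) t :=
  if t \in iota (n * N) N then B t else F t.

Lemma cylinder_with_window n S F : uniq S ->
  (forall t, t \in S -> (n.+1 * N <= t)%N /\ mxborel (F t)) -> [/\
    uniq (S ++ iota (n * N) N),
    forall t, t \in S ++ iota (n * N) N -> (n * N <= t)%N /\ mxborel (with_window n F t),
    cylinder (S ++ iota (n * N) N) (with_window n F) = cylinder S F `&` window_event n &
    pr (cylinder S F `&` window_event n) = pr (cylinder S F) * pr (window_event n)].
Proof.
set I := iota (n * N) N => uS SF.
have S_notin_I t : t \in S -> t \notin I by case/SF => + _; rewrite mem_iota mulSn; lia.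
have F'_S t : t \in S -> mxborel (with_window n F t).
  by move=> tS; rewrite /with_window (negbTE (S_notin_I t tS)); case: (SF t tS).
have F'_I t : t \in I -> mxborel (with_window n F t) by move=> tI; rewrite /with_window tI.
have cylS : cylinder S (with_window n F) = cylinder S F.
  by apply: eq_big_seq => t tS; rewrite /with_window (negbTE (S_notin_I t tS)).
have cylI : cylinder I (with_window n F) = window_event n.
  by apply: eq_big_seq => t tI; rewrite /with_window tI.
have uSI : uniq (S ++ I).
  rewrite cat_uniq uS iota_uniq andbT; apply/hasPn => t tI; apply/negP => tS.
  by move: (S_notin_I t tS); rewrite tI.
have F'_SI t : t \in S ++ I -> mxborel (with_window n F t).
  by rewrite mem_cat => /orP[/F'_S|/F'_I].
have cylSI : cylinder (S ++ I) (with_window n F) = cylinder S F `&` window_event n.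
  by rewrite /cylinder big_cat /= -/(cylinder S _) -/(cylinder I _) cylS cylI.
split => //.
- move=> t tSI; split; last exact: F'_SI.
  by move: tSI; rewrite mem_cat mem_iota => /orP[/SF[+ _]|]; rewrite ?mulSn; lia.
- rewrite -cylSI (pr_cylinder uSI F'_SI) big_cat /= -(pr_cylinder uS F'_S).
  by rewrite -(pr_cylinder (iota_uniq _ _) F'_I) cylS cylI.
Qed.

(* Independence of the complements of the (disjoint) window events, derived from
   the product rule for cylinders by peeling off one window at a time. *)
Lemma pr_cylinder_no_window n S F : uniq S ->
  (forall t, t \in S -> (n * N <= t)%N /\ mxborel (F t)) ->
  pr (cylinder S F `&` no_window_before n) =
    pr (cylinder S F) * \prod_(0 <= k < n) (1 - pr (window_event k)).
Proof.
elim: n S F => [|n IH] S F uS SF; first by rewrite /no_window_before !big_geq // setIT mulr1.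
have SF_borel t : t \in S -> mxborel (F t) by case/SF.
have [uS' SF' cylE pr_cylE] := cylinder_with_window uS SF.
rewrite /no_window_before big_nat_recr //= -/(no_window_before n) setIA -setDE.
rewrite prD; [|exact: measurableI (measurable_cylinder SF_borel) (measurable_no_window_before n)
             |exact: measurable_window_event].
rewrite setIAC -cylE (IH _ _ uS' SF') cylE pr_cylE IH //; first by rewrite big_nat_recr //=; ring.
by move=> t /SF[nt Ft]; split => //; move: nt; rewrite mulSn; lia.
Qed.

(* If each of the independent window events has probability at least [q > 0],
   then missing the first [n] of them has probability at most [(1 - q)^n -> 0]. *)
Lemma ae_some_window (q : R) : 0 < q -> (forall k, q <= pr (window_event k)) ->
  {ae P, forall om, exists k, window_event k om}.
Proof.
move=> q0 qle.
have q1 : q <= 1 by apply: le_trans (qle 0%N) (pr_le1 (measurable_window_event 0)).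
have mZ : measurable (\bigcap_k ~` window_event k).
  by apply: bigcapT_measurable => k; apply/measurableC/measurable_window_event.
have no_window_le n : pr (no_window_before n) <= (1 - q) ^+ n.
  have := @pr_cylinder_no_window n [::] B isT (fun t => False_ind _ \o notF).
  rewrite /cylinder big_nil setTI pr_setT mul1r => ->.
  rewrite -[n in _ ^+ n]subn0 -prodr_const_nat; apply: ler_prod => k _.
  have := qle k; have := pr_le1 (measurable_window_event k).
  by move=> ? ?; apply/andP; split; lra.
have Z_le n : pr (\bigcap_k ~` window_event k) <= (1 - q) ^+ n.
  apply: le_trans (no_window_le n).
  apply: le_pr => //; first exact: measurable_no_window_before.
  move=> om Zom; rewrite /no_window_before; elim: n => [|n IHn]; first by rewrite big_geq.
  by rewrite big_nat_recr //=; split => //; exact: Zom.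
have geom_cvg : (1 - q) ^+ n @[n --> \oo] --> 0.
  by apply: cvg_expr; rewrite ger0_norm; lra.
exists (\bigcap_k ~` window_event k); split => //; last first.
  by move=> om /= no_k k _ kom; apply: no_k; exists k.
rewrite prE //; congr (_%:E); apply/eqP; rewrite eq_le pr_ge0 // andbT.
rewrite -(cvg_lim _ geom_cvg) //; apply: limr_ge; first by apply/cvg_ex; exists 0.
exact: nearW.
Qed.

End IndependentWindows.

Section CoordinateBoxes.
Variable R : realType.
Variables (d : measure_display) (Omega : measurableType d) (nx : nat)
  (X : Omega -> 'cV[R]_nx).
Hypothesis X_measurable : rvec_measurable X.

Definition box (c : 'cV[R]_nx) (del : R) : set 'cV[R]_nx :=
  [set v | forall l, `|v l 0 - c l 0| < del].

Lemma box_mxborel c del : mxborel (box c del).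
Proof.
apply: sub_sigma_algebra; exists (fun l => `]c l 0 - del, c l 0 + del[%classic).
  by move=> l; exact: measurable_itv.
by apply/seteqP; split => v /= h l; move: (h l); rewrite /= in_itv /= ltr_distl.
Qed.

Lemma measurable_coord l : measurable_fun setT (fun om => X om l 0).
Proof.
move=> _ Y mY; rewrite setTI.
have -> : (fun om => X om l 0) @^-1` Y =
    X @^-1` [set v | forall i, (if i == l then Y else setT) (v i 0)].
  apply/seteqP; split => om /=; last by move/(_ l); rewrite eqxx.
  by move=> Yom i; case: eqP => // ->.
apply: X_measurable; apply: sub_sigma_algebra; eexists; last reflexivity.
by move=> i; case: eqP.
Qed.

Lemma measurable_vnorm_ball (c : 'cV[R]_nx) e : 0 < e ->
  measurable [set om | vnorm (X om - c) < e].
Proof.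
move=> e0; pose f om := \sum_(l < nx) (X om l 0 - c l 0) ^+ 2.
have mf : measurable_fun setT f.
  apply: measurable_sum => l; apply: measurable_realfun.measurable_funX.
  by apply: measurable_realfun.measurable_funB; [exact: measurable_coord | exact: measurable_cst].
have -> : [set om | vnorm (X om - c) < e] = f @^-1` `]-oo, e ^+ 2[.
  have e_sqrt : e = Num.sqrt (e ^+ 2) by rewrite sqrtr_sqr ger0_norm // ltW.
  apply/seteqP; split => om /=; rewrite in_itv /= /vnorm;
   (have -> : \sum_i ((X om - c) i 0) ^+ 2 = f om by apply: eq_bigr => l _; rewrite !mxE);
   by rewrite [in Y in Num.sqrt _ < Y]e_sqrt ltr_sqrt ?exprn_gt0.
by rewrite -[_ @^-1` _]setTI; exact: mf.
Qed.

Lemma vnorm_ball_sub_box (c : 'cV[R]_nx) e :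
  [set om | vnorm (X om - c) < e] `<=` X @^-1` box c e.
Proof.
move=> om /= h l; apply: le_lt_trans h; have := coord_le_vnorm (X om - c) l.
by rewrite !mxE.
Qed.

End CoordinateBoxes.

Section RowConvergence.
Variable R : realType.
Variables (d : measure_display) (Omega : measurableType d) (P : probability Omega R)
  (nx p mw r : nat) (thstar : 'cV[R]_p) (Pi_w : 'M[R]_(mw, nx)) (pi_w : 'cV[R]_mw)
  (D : nat -> 'M[R]_(nx, p)) (w : nat -> Omega -> 'cV[R]_nx)
  (M : 'M[R]_(r, p)) (mu0 : 'cV[R]_r) (p_w : R -> R) (tau beta : R) (Nu : nat).
Hypothesis pi_w_gt0 : forall i, 0 < pi_w i 0.
Hypothesis W_bounded : vbounded (polytope Pi_w pi_w).
Hypothesis w_measurable : forall t, rvec_measurable (w t).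
Hypothesis w_independent : mutually_independent P w.
Hypothesis w_in_W : forall t om, polytope Pi_w pi_w (w t om).
Hypothesis p_w_gt0 : forall e : R, 0 < e -> 0 < p_w e <= 1.
Hypothesis tight_bound : forall w0, boundary (polytope Pi_w pi_w) w0 ->
  forall e : R, 0 < e -> forall t,
  ((p_w e)%:E <= P [set om | (vnorm (w t om - w0) < e)%R])%E.
Hypothesis tau_gt0 : 0 < tau.
Hypothesis beta_gt0 : 0 < beta.
Hypothesis D_bounded : forall t, opnorm_le (D t) tau.
Hypothesis D_excited : forall t, psd_ge (\sum_(t <= j < t + Nu) (D j)^T *m D j) beta.
Hypothesis M_rows_unit : forall i, vnorm (row i M)^T = 1.
Hypothesis ThetaSet_bounded : forall mu : 'cV[R]_r, vbounded (ThetaSet M mu).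
Hypothesis thstar_in_Theta0 : ThetaSet M mu0 thstar.
Hypothesis nx_gt0 : (0 < nx)%N.

Lemma divn_window k s : (k * Nu <= s < k * Nu + Nu)%N -> (s %/ Nu)%N = k.
Proof.
move=> /andP[le_s lt_s]; have Nu0 : (0 < Nu)%N by lia.
by rewrite -(subnKC le_s) divnMDl // divn_small ?addn0 // ltn_subLR.
Qed.

Lemma pr_boundary_window_ge (w0 : nat -> 'cV[R]_nx) del k : 0 < del ->
  (forall s, boundary (polytope Pi_w pi_w) (w0 s)) ->
  p_w del ^+ Nu <= pr P (window_event w Nu (fun s => box (w0 s) del) k).
Proof.
move=> del0 w0_bd; have /andP[pw0 _] := p_w_gt0 del0.
rewrite /window_event pr_cylinder ?iota_uniq // => [|s _]; last exact: box_mxborel.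
have -> : iota (k * Nu) Nu = index_iota (k * Nu) (k * Nu + Nu) by rewrite /index_iota addKn.
rewrite -{1}[Nu](addKn (k * Nu)) -prodr_const_nat; apply: ler_prod => s _; rewrite ltW //=.
have mball := measurable_vnorm_ball (w_measurable s) (w0 s) del0.
apply: le_trans _ (le_pr P mball _ (@vnorm_ball_sub_box _ _ _ _ (w s) (w0 s) del)).
  by rewrite -lee_fin -prE //; exact: tight_bound.
by apply: w_measurable; exact: box_mxborel.
Qed.

(* Choose the box radius [del] so that the window bound [Nu (del + nx Bc del)]
   stays below [eps]; each window then hits its boxes with probability
   at least [p_w(del)^Nu > 0]. *)
Lemma row_mu_per_ae i (eps : R) : 0 < eps -> {ae P, forall om, exists k,
  mu_per Pi_w pi_w D thstar M mu0 Nu (fun t => w t om) k i 0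
    <= (row i M *m thstar) 0 0 + eps}.
Proof.
move=> eps0.
have x_ex k : exists x, gram D Nu k *m x = (row i M)^T /\ vnorm x <= p%:R / beta.
  apply: psd_ge_solve beta_gt0 (D_excited _) _ => l.
  by have := M_coord_le1 M_rows_unit i l.
pose x k := sval (cid (x_ex k)).
have [x_gram x_le] : (forall k, gram D Nu k *m x k = (row i M)^T) /\
    forall k, vnorm (x k) <= p%:R / beta by split => k; case: (svalP (cid (x_ex k))).
pose Bc := tau * (p%:R / beta).
pose c s := D s *m x (s %/ Nu)%N.
have c_le s l : `|c s l 0| <= Bc.
  apply: le_trans (coord_le_vnorm _ l) (le_trans (D_bounded s _) _).
  by apply: ler_wpM2l; [exact: ltW | exact: x_le].
pose K := Nu%:R * (1 + nx%:R * Bc).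
have Bc0 : 0 <= Bc by rewrite mulr_ge0 ?divr_ge0 // ltW.
have K0 : 0 <= K by rewrite mulr_ge0 // addr_ge0 // mulr_ge0.
pose del := eps / (K + 1).
have del0 : 0 < del by rewrite divr_gt0 // ltr_wpDl.
have Kdel : K * del <= eps by rewrite /del mulrA ler_pdivrMr ?ltr_wpDl //; nra.
pose w0 s := sval (cid (boundary_near_argmin pi_w_gt0 W_bounded (c s) nx_gt0 del0)).
have w0P s := svalP (cid (boundary_near_argmin pi_w_gt0 W_bounded (c s) nx_gt0 del0)).
pose B s := box (w0 s) del.
have pw_gt0 : 0 < p_w del ^+ Nu by rewrite exprn_gt0 //; case/andP: (p_w_gt0 del0).
have B_borel s : mxborel (B s) := box_mxborel _ _.
have w0_bd s : boundary (polytope Pi_w pi_w) (w0 s) by case: (w0P s).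
have window_ge k := pr_boundary_window_ge k del0 w0_bd.
have := ae_some_window w_measurable w_independent B_borel pw_gt0 window_ge.
apply: filterS => om [k hit].
exists k.+1.
apply: (mu_perS_le (fun t => w_in_W t om) M_rows_unit ThetaSet_bounded thstar_in_Theta0).
move=> th _ unf.
apply: le_trans (window_bound (w0 := w0) (eta := del) (del := del) (Bc := Bc) (x_gram k) _ unf) _.
  move=> s s_win; have sk := divn_window s_win.
  have [_ _ near_min] := w0P s; split; first by rewrite -sk; exact: near_min.
    by apply: (cylinder_mem hit); rewrite mem_iota.
  by move=> l; have := c_le s l; rewrite /c sk.
have -> : Nu%:R * (del + nx%:R * Bc * del) = K * del by rewrite /K; ring.
by rewrite lerD2l.
Qed.

End RowConvergence.

Theorem corollary3
  (R : realType) (d : measure_display) (Omega : measurableType d)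
  (P : probability Omega R)
  (nx p mw r : nat)
  (thstar : 'cV[R]_p)
  (Pi_w : 'M[R]_(mw, nx)) (pi_w : 'cV[R]_mw)
  (D : nat -> 'M[R]_(nx, p))
  (w : nat -> Omega -> 'cV[R]_nx)
  (M : 'M[R]_(r, p)) (mu0 : 'cV[R]_r)
  (p_w : R -> R) (tau beta : R) (Nu : nat) :
  (forall i, 0 < pi_w i 0) ->
  vbounded (polytope Pi_w pi_w) ->
  (forall t, rvec_measurable (w t)) ->
  mutually_independent P w ->
  (forall t (om : Omega), polytope Pi_w pi_w (w t om)) ->
  (forall e : R, 0 < e -> 0 < p_w e <= 1) ->
  (forall w0, boundary (polytope Pi_w pi_w) w0 -> forall e : R, 0 < e ->
     forall t, ((p_w e)%:E <= P [set om | (vnorm (w t om - w0) < e)%R])%E) ->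
  0 < tau -> 0 < beta -> (ceil_div p nx <= Nu)%N ->
  (forall t, opnorm_le (D t) tau) ->
  (forall t, psd_ge (\sum_(t <= j < t + Nu) (D j)^T *m D j) beta) ->
  (forall i, vnorm (row i M)^T = 1) ->
  (forall mu : 'cV[R]_r, vbounded (ThetaSet M mu)) ->
  ThetaSet M mu0 thstar ->
  {ae P, forall om : Omega,
     [set th | forall t, Theta_t Pi_w pi_w D thstar M mu0 Nu (fun t => w t om) t th]
     = [set thstar]}.
Proof.
(* The bound [ceil_div p nx <= Nu] is implied by persistent excitation. *)
move=> pi_w_gt0 W_bd w_meas w_indep w_in_W p_w_gt0 tight tau0 beta0 _ D_bd D_exc
  M_rows Theta_bd th0.
have [p0|p_gt0] := posnP p.
  apply: aeW => om; apply/seteqP; split => th /=; last first.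
    by move=> -> t; exact: mu_per_thstar (fun t => w_in_W t om) M_rows Theta_bd th0 _.
  by move=> _; apply/matrixP => i; have := ltn_ord i; rewrite {2}p0.
have [Nu_gt0 nx_gt0] := psd_ge_gram_dims beta0 p_gt0 (D_exc 0%N).
have Sinv_gt0 (n : nat) : 0 < n.+1%:R^-1 :> R by rewrite invr_gt0.
have row_ae i n := row_mu_per_ae pi_w_gt0 W_bd w_meas w_indep w_in_W p_w_gt0
  tight tau0 beta0 D_bd D_exc M_rows Theta_bd th0 nx_gt0 i (Sinv_gt0 n).
have all_rows := ae_foralln (fun n => filter_forall (ae_filter_ringOfSetsType P) (row_ae ^~ n)).
apply: filterS all_rows => om mu_near.
exact: Theta_inter_thstar (fun t => w_in_W t om) M_rows Theta_bd th0 Nu_gt0 _.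
Qed.
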